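(* Let $I\subseteq\mathbb{R}$ be an interval, $p\in\mathbb{N}$, $\mathbf{d}=(d_1,\dots,d_p)\in\mathbb{N}^p$, $\alpha\in\mathbb{N}_p^{\mathbf{d}}$, and let $\mathbf{M}=(M_1,\dots,M_p)$ be a $\mathbf{d}$-averaging mapping on $I$. Assume that the root graph $\mathcal{R}(G_\alpha)$ is ergodic and that each $M_i$ ($i\in\{1,\dots,p\}$) is continuous and strict. Then there exists a unique continuous $\mathbf{M}_\alpha$-invariant mean $K_\alpha\colon I^p\to I$ such that $$\lim_{n\to\infty}\mathbf{M}_\alpha^n=\mathbf{K}_\alpha\quad\text{pointwise on } I^p,$$ where $\mathbf{K}_\alpha\colon I^p\to I^p$, $\mathbf{K}_\alpha=(K_\alpha,\dots,K_\alpha)$, and $K_\alpha$ depends only on the root coordinates: there exists a mean $K_\alpha^*\colon I^{|R(G_\alpha)|}\to I$ such that $K_\alpha(x_1,\dots,x_p)=K^*_\alpha(x_i: i\in R(G_\alpha))$ for all $(x_1,\dots,x_p)\in I^p$.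
   Context: A $k$-variable mean on an interval $I$ is a function $M\colon I^k\to I$ with $\min(x)\le M(x)\le\max(x)$ for all $x\in I^k$; it is strict if both inequalities are strict for every nonconstant $x$. A mean-type mapping is $\mathbf{M}=(M_1,\dots,M_p)\colon I^p\to I^p$ with each $M_i$ a $p$-variable mean; a function $K\colon I^p\to I$ is $\mathbf{M}$-invariant if $K\circ\mathbf{M}=K$. $\mathbf{M}^n$ denotes the $n$-th iterate. Notation: $\mathbb{N}=\{1,2,\dots\}$, $\mathbb{N}_p=\{1,\dots,p\}$, $\mathbb{N}_p^{\mathbf{d}}=\mathbb{N}_p^{d_1}\times\dots\times\mathbb{N}_p^{d_p}$. A $\mathbf{d}$-averaging mapping on $I$ is a sequence $\mathbf{M}=(M_1,\dots,M_p)$ where each $M_i$ is a $d_i$-variable mean on $I$. For $\alpha=(\alpha_1,\dots,\alpha_p)\in\mathbb{N}_p^{\mathbf{d}}$, $\alpha_i=(\alpha_{i,1},\dots,\alpha_{i,d_i})$, define $\mathbf{M}_\alpha\colon I^p\to I^p$ by $\mathbf{M}_\alpha(x_1,\dots,x_p)=\big(M_i(x_{\alpha_{i,1}},\dots,x_{\alpha_{i,d_i}})\big)_{i=1}^p$. The $\alpha$-incidence graph is the digraph $G_\alpha=(\mathbb{N}_p,E_\alpha)$ with $E_\alpha=\{(\alpha_{i,j},i): i\in\mathbb{N}_p,\ j\in\mathbb{N}_{d_i}\}$. Graph notions: a walk is a sequence $(v_0,\dots,v_n)$ with consecutive pairs being edges; $v\leadsto w$ if a walk from $v$ to $w$ exists;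 a digraph is irreducible if $v\leadsto w$ for all vertices $v,w$; a cycle is a nonempty walk whose only repeated vertices are the first and last; a digraph is aperiodic if no integer $k>1$ divides the length of every cycle; ergodic means nonempty, irreducible and aperiodic. The root $R(G)$ of a digraph $G=(V,E)$ is the union of those strongly connected components (classes of $v\sim w\iff v\leadsto w$ and $w\leadsto v$) that receive no edge from a vertex in a different component; the root graph is $\mathcal{R}(G)=(R(G),E\cap(R(G)\times R(G)))$. *)

From HB Require Import structures.
From mathcomp Require Import all_boot all_order all_algebra.
From mathcomp Require Import all_classical all_reals all_analysis.
Set Implicit Arguments. Unset Strict Implicit. Unset Printing Implicit Defensive.
Import Order.TTheory GRing.Theory Num.Theory.
Import numFieldNormedType.Exports.
Local Open Scope classical_set_scope.
Local Open Scope ring_scope.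

(** Points of R^k are row vectors 'rV[R]_k; the j-th coordinate of x is x ord0 j. *)

Definition cube {R : realType} (I : set R) (k : nat) : set 'rV[R]_k :=
  [set x | forall j : 'I_k, I (x ord0 j)].
Arguments cube {R} I k.

(** min(x) <= y  <->  some coordinate is <= y;  y <= max(x) <-> some coordinate is >= y *)
Definition is_mean {R : realType} (I : set R) (k : nat) (M : 'rV[R]_k -> R) : Prop :=
  forall x, cube I k x ->
    I (M x) /\ (exists j, x ord0 j <= M x) /\ (exists j, M x <= x ord0 j).

Definition nonconstant {R : realType} (k : nat) (x : 'rV[R]_k) : Prop :=
  exists j j', x ord0 j != x ord0 j'.

Definition is_strict_mean {R : realType} (I : set R) (k : nat) (M : 'rV[R]_k -> R) : Prop :=
  is_mean I M /\
  forall x, cube I k x -> nonconstant x ->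
    (exists j, x ord0 j < M x) /\ (exists j, M x < x ord0 j).

Definition Malpha {R : realType} (p : nat) (d : 'I_p -> nat)
  (alpha : forall i : 'I_p, 'I_(d i) -> 'I_p)
  (M : forall i : 'I_p, 'rV[R]_(d i) -> R) (x : 'rV[R]_p) : 'rV[R]_p :=
  \row_(i < p) M i (\row_(j < d i) x ord0 (alpha i j)).

Definition inc_edge (p : nat) (d : 'I_p -> nat)
  (alpha : forall i : 'I_p, 'I_(d i) -> 'I_p) : rel 'I_p :=
  fun u v => [exists j : 'I_(d v), alpha v j == u].

Definition scc {T : finType} (e : rel T) (v w : T) : bool :=
  connect e v w && connect e w v.

(** root: union of the components receiving no edge from a different component *)
Definition root_set {T : finType} (e : rel T) : {set T} :=
  [set v | [forall u, forall w, (scc e u v && e w u) ==> scc e w v]].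

Definition induced {T : finType} (e : rel T) (S : {set T}) : rel T :=
  fun u v => [&& u \in S, v \in S & e u v].

Definition irreducible_on {T : finType} (e : rel T) (S : {set T}) : Prop :=
  forall v w, v \in S -> w \in S -> connect e v w.

(** a cycle of length n: walk (v, s_1, ..., s_n) with s_n = v, n >= 1,
    and no repeated vertex except first = last *)
Definition is_cycle {T : finType} (e : rel T) (v : T) (s : seq T) : bool :=
  [&& path e v s, last v s == v, uniq s & (0 < size s)%N].

Definition aperiodic {T : finType} (e : rel T) : Prop :=
  ~ exists k : nat, (1 < k)%N /\
      forall v s, is_cycle e v s -> (k %| size s)%N.

Definition ergodic_on {T : finType} (e : rel T) (S : {set T}) : Prop :=
  S != finset.set0 /\ irreducible_on (induced e S) S /\ aperiodic (induced e S).

(* Every vertex of the incidence graph is reached from a root vertex [r] by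
   walks of one common length [m], because closed walks at [r] inside the
   ergodic root graph have coprime lengths.  Along an orbit of [M_alpha] the
   largest coordinate decreases and the smallest one increases.  At a cluster
   point [z] of the orbit, both extremes are preserved by [M_alpha^m]; since a
   strict mean takes an extreme value only at constant arguments, the extremes
   of [M_alpha^m z] propagate back along the walks to [z_r], so [max z = z_r =
   min z] and the two extremes of the orbit share their limit [K x].  [K] is
   continuous because it is squeezed between [min] and [max] of [M_alpha^n],
   and it only sees the root coordinates because the root receives no edge
   from outside. *)

From Pilot Require Import Defs.
From HB Require Import structures.
From mathcomp Require Import all_boot all_order all_algebra.
From mathcomp Require Import all_classical all_reals all_analysis.
From mathcomp Require Import zify lra.
Import Order.TTheory GRing.Theory Num.Theory.
Import numFieldNormedType.Exports.
Set Implicit Arguments. Unset Strict Implicit. Unset Printing Implicit Defensive.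

Section AdditivelyClosed.
Variable P : nat -> Prop.
Hypothesis P0 : P 0.
Hypothesis PD : forall a b, P a -> P b -> P (a + b).

Lemma addn_closedM k a : P a -> P (k * a).
Proof. by move=> Pa; elim: k => [|k IH]; rewrite ?mul0n // mulSn; apply: PD. Qed.

Lemma addn_closed_large_consecutive b c :
  P (b * c) -> P (b.+1 * c) -> forall k, b * b <= k -> P (k * c).
Proof.
move=> Pb Pb1 k le_bb_k.
have [b0 | b_gt0] := posnP b; first by rewrite b0 mul1n in Pb1; apply: addn_closedM.
set q := k %/ b; set r := k %% b.
have r_lt_b : r < b by rewrite ltn_mod.
have b_le_q : b <= q by rewrite leq_divRL.
have -> : k * c = (q - r) * (b * c) + r * (b.+1 * c).
  by rewrite (divn_eq k b) -/q -/r; nia.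
by apply: PD; apply: addn_closedM.
Qed.

Lemma addn_closed_large_gcd g l :
  0 < g -> (exists N, forall k, N <= k -> P (k * g)) -> P l ->
  exists N, forall k, N <= k -> P (k * gcdn g l).
Proof.
move=> g_gt0 [N PNg] Pl; set h := gcdn g l.
(* By Bezout, [a * l + N * g] and [(c + N) * g] are consecutive multiples of [h]. *)
have [a _ /dvdnP [c def_cg]] := Bezoutl l g_gt0.
have Pa : P (a * l + N * g) by apply: PD; [apply: addn_closedM | apply: PNg].
have Pc : P ((c + N) * g) by apply: PNg; rewrite leq_addl.
have /dvdnP [b def_b] : h %| a * l + N * g.
  by rewrite dvdn_add ?dvdn_mull ?dvdn_gcdr ?dvdn_gcdl.
have def_b1 : (c + N) * g = b.+1 * h by rewrite mulnDl -def_cg mulSn -def_b; lia.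
rewrite def_b in Pa; rewrite def_b1 in Pc.
by exists (b * b); apply: addn_closed_large_consecutive.
Qed.

Lemma addn_closed_large :
  (forall k, 1 < k -> exists2 l, P l & ~~ (k %| l)) ->
  exists N, forall n, N <= n -> P n.
Proof.
move=> coprime_lengths.
suff large_mul g : 0 < g -> (exists N, forall k, N <= k -> P (k * g)) ->
    exists N, forall n, N <= n -> P n.
  have [l Pl l_odd] := coprime_lengths 2 isT.
  apply: (large_mul l); last by exists 0 => k _; apply: addn_closedM.
  by case: l l_odd {Pl}.
elim/ltn_ind: g => g IH g_gt0 Pg.
have [g_le1 | g_gt1] := leqP g 1.
  by case: Pg => N PN; exists N => n /PN; rewrite (_ : g = 1) ?muln1 //; lia.
have [l Pl g_ndvd_l] := coprime_lengths g g_gt1.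
apply: (IH (gcdn g l)); last exact: addn_closed_large_gcd.
- rewrite ltn_neqAle dvdn_leq ?dvdn_gcdl // andbT.
  by apply: contraNneq g_ndvd_l => <-; rewrite dvdn_gcdr.
- by rewrite gcdn_gt0 g_gt0.
Qed.

End AdditivelyClosed.

Section Walks.
Variable T : finType.
Implicit Types (e : rel T) (x y z : T).

Fixpoint walk e n x y : bool :=
  if n is n'.+1 then [exists u, e x u && walk e n' u y] else x == y.

Lemma walk_cat e m n x y z : walk e m x y -> walk e n y z -> walk e (m + n) x z.
Proof.
elim: m x => [|m IH] x /=; first by move/eqP->.
by case/existsP=> u /andP [exu wu] wyz; apply/existsP; exists u; rewrite exu IH.
Qed.

Lemma walk_sub e e' n x y : subrel e e' -> walk e n x y -> walk e' n x y.
Proof.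
move=> ee'; elim: n x => [|n IH] x //= /existsP [u /andP [exu wu]].
by apply/existsP; exists u; rewrite ee' ?IH.
Qed.

Lemma path_walk e x s : path e x s -> walk e (size s) x (last x s).
Proof.
elim: s x => [|u s IH] x /=; first by rewrite eqxx.
by case/andP=> exu pu; apply/existsP; exists u; rewrite exu IH.
Qed.

Lemma connect_walk e x y : connect e x y -> exists n, walk e n x y.
Proof. by case/connectP=> s ps ->; exists (size s); apply: path_walk. Qed.

Lemma scc_trans e x y z : scc e x y -> scc e y z -> scc e x z.
Proof.
by case/andP=> cxy cyx /andP [cyz czy]; rewrite /scc (connect_trans cxy) ?(connect_trans czy).
Qed.

Lemma scc_sym e x y : scc e x y -> scc e y x.
Proof. by rewrite /scc andbC. Qed.

Lemma root_closed e u v : e u v -> v \in root_set e -> u \in root_set e.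
Proof.
move=> euv; rewrite !inE => /forallP root_v.
have root_v' u' w : scc e u' v -> e w u' -> scc e w v.
  by move=> su'v ewu'; move/forallP/(_ w)/implyP: (root_v u'); apply; rewrite su'v.
have suv : scc e u v by apply: root_v' euv; rewrite /scc connect0.
apply/forallP=> u'; apply/forallP=> w; apply/implyP=> /andP [su'u ewu'].
exact: scc_trans (root_v' _ _ (scc_trans su'u suv) ewu') (scc_sym suv).
Qed.

(* A vertex with the fewest ancestors among the ancestors of [i] lies in the root. *)
Lemma root_connect e i : exists2 r, r \in root_set e & connect e r i.
Proof.
pose anc w := [set u | connect e u w].
have i_anc : i \in [pred w | connect e w i] := connect0 e i.
have [w cwi min_w] := arg_minnP (fun w => #|anc w|) i_anc.
exists w => //; rewrite inE; apply/forallP=> u; apply/forallP=> w'; apply/implyP.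
case/andP=> /andP [cuw _] ew'u.
have cw'w : connect e w' w := connect_trans (connect1 ew'u) cuw.
have sub : anc w' \subset anc w.
  by apply/fintype.subsetP=> z; rewrite !inE => /connect_trans; apply.
have /fintype.subsetP/(_ w) : anc w \subset anc w'.
  rewrite -(subset_leqif_card sub).2 eqn_leq subset_leq_card // min_w //.
  exact: connect_trans cw'w cwi.
by rewrite !inE connect0 => /(_ isT) cww'; rewrite /scc cw'w.
Qed.

(* Bare [induced] would denote MathComp-Analysis' induced charge. *)
Lemma induced_sub e S : subrel (Defs.induced e S) e.
Proof. by move=> x y /and3P []. Qed.

Lemma aperiodic_closed_walks e S v :
  irreducible_on (Defs.induced e S) S -> aperiodic (Defs.induced e S) -> v \in S ->
  forall k, 1 < k -> exists2 l, walk (Defs.induced e S) l v v & ~~ (k %| l).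
Proof.
move=> irr aper vS k k_gt1; apply: contrapT => no_l; apply: aper.
have k_dvd l : walk (Defs.induced e S) l v v -> k %| l.
  by move=> wl; apply: contrapT => /negP nd; apply: no_l; exists l.
exists k; split=> // v' s /and4P [ps /eqP ls _ s_gt0].
have v'S : v' \in S by case: s ps s_gt0 {ls} => // u s /= /andP [/and3P []].
have [a wa] := connect_walk (irr v v' vS v'S).
have [b wb] := connect_walk (irr v' v v'S vS).
have cycle_walk := path_walk ps; rewrite ls in cycle_walk.
have := k_dvd _ (walk_cat wa (walk_cat cycle_walk wb)).
by rewrite addnCA (dvdn_addl _ (k_dvd _ (walk_cat wa wb))).
Qed.

(* All large lengths occur among closed walks at [r]; prolong them to [i]. *)
Lemma ergodic_root_walk e :
  ergodic_on e (root_set e) ->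
  exists r, exists2 m, r \in root_set e & forall i, walk e m r i.
Proof.
case=> nonempty [irr aper]; set S := root_set e.
have [r rS] := set0Pn _ nonempty.
have [N closed_N] : exists N, forall n, N <= n -> walk (Defs.induced e S) n r r.
  apply: addn_closed_large; first by rewrite /= eqxx.
    by move=> a b; apply: walk_cat.
  exact: aperiodic_closed_walks.
have reach i : exists n, walk e n r i.
  have [s sS csi] := root_connect e i.
  apply/connect_walk/(connect_trans _ csi)/(connect_sub _ (irr r s rS sS)).
  by move=> x y /induced_sub/connect1.
have [len len_walk] := boolp.choice reach.
exists r, (N + \max_i len i) => // i.
have len_le : len i <= \max_j len j := leq_bigmax i.
rewrite -(subnK len_le) addnA.
exact: walk_cat (walk_sub (@induced_sub e S) (closed_N _ (leq_addr _ _))) (len_walk i).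
Qed.

End Walks.

Local Open Scope classical_set_scope.
Local Open Scope ring_scope.

Lemma cvg_row {R : realType} {T : Type} (F : set_system T) {FF : Filter F} n
    (f : T -> 'rV[R]_n) (l : 'rV[R]_n) :
  (forall j, (fun t => f t ord0 j) @ F --> l ord0 j) -> f @ F --> l.
Proof.
move=> fj; apply/cvg_ballP => eps eps_gt0.
have near_l j : \forall t \near F, ball (l ord0 j) eps (f t ord0 j).
  exact: (cvg_ballP _ _).1 (fj j) eps eps_gt0.
apply: filterS (filter_forall FF near_l) => t near_lt.
by split=> // i j; rewrite (ord1 i); apply: near_lt.
Qed.

Lemma within_continuous_comp_within {T U V : topologicalType} {A : set T} {B : set U}
    {f : T -> U} {g : U -> V} :
  (forall x, A x -> B (f x)) -> {within A, continuous f} -> {within B, continuous g} ->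
  {within A, continuous (g \o f)}.
Proof.
move=> fAB /subspace_continuousP fc /subspace_continuousP gc.
apply/(@subspace_continuousP _ A _ (g \o f)) => x Ax.
have fAx : f @ within A (nbhs x) --> within B (nbhs (f x)).
  move=> W /(fc x Ax) fW.
  by apply: filterS2 (withinT A _) fW => y /fAB By /(_ By).
exact: cvg_trans (cvg_app g fAx) (gc _ (fAB _ Ax)).
Qed.

Lemma cluster_cvg_within {T V : topologicalType} (A : set T) (F : set_system T)
    {FF : Filter F} (g : T -> V) (z : T) (l : V) :
  hausdorff_space V -> F A -> cluster F z -> A z ->
  {within A, continuous g} -> g @ F --> l -> g z = l.
Proof.
move=> hV FA; rewrite cluster_cvgE => -[G PG [Gz FG]] Az /subspace_continuousP gc gl.
have GA : within A (nbhs z) `<=` G.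
  by move=> W /Gz GW; apply: filterS2 (FG _ FA) GW => y Ay /(_ Ay).
apply: (cvg_unique hV (F := g @ G)); first exact: cvg_trans (cvg_app g GA) (gc _ Az).
exact: cvg_trans (cvg_app g FG) gl.
Qed.

Section RowExtrema.
Context {R : realType} {n : nat}.
Implicit Types (u v : 'rV[R]_n.+1).

Definition rowmax v : R := v ord0 [arg max_(i > ord0) v ord0 i]%O.
Definition rowmin v : R := - rowmax (- v).

Lemma rowmax_ge v j : v ord0 j <= rowmax v.
Proof. by rewrite /rowmax; case: arg_maxP => // i _; apply. Qed.

Lemma rowmax_attained v : exists i, rowmax v = v ord0 i.
Proof. by exists [arg max_(i > ord0) v ord0 i]%O. Qed.

Lemma rowmin_le v j : rowmin v <= v ord0 j.
Proof. by have := rowmax_ge (- v) j; rewrite mxE lerNl. Qed.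

Lemma rowmin_attained v : exists i, rowmin v = v ord0 i.
Proof. by have [i vi] := rowmax_attained (- v); exists i; rewrite /rowmin vi mxE opprK. Qed.

Lemma rowmin_le_rowmax v : rowmin v <= rowmax v.
Proof. exact: le_trans (rowmin_le v ord0) (rowmax_ge v ord0). Qed.

Lemma rowmax_dist u v eps :
  (forall j, `|u ord0 j - v ord0 j| < eps) -> `|rowmax u - rowmax v| < eps.
Proof.
move=> uv; have [i ui] := rowmax_attained u; have [k vk] := rowmax_attained v.
have := uv i; have := uv k; have := rowmax_ge u k; have := rowmax_ge v i.
rewrite ui vk !ltr_norml; lra.
Qed.

Lemma rowmin_dist u v eps :
  (forall j, `|u ord0 j - v ord0 j| < eps) -> `|rowmin u - rowmin v| < eps.
Proof.
move=> uv; rewrite /rowmin -opprD normrN rowmax_dist // => j.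
by rewrite !mxE -opprD normrN.
Qed.

Lemma coord_dist_continuous (h : 'rV[R]_n.+1 -> R) :
  (forall u v eps, (forall j, `|u ord0 j - v ord0 j| < eps) -> `|h u - h v| < eps) ->
  continuous h.
Proof.
move=> h_dist v; apply/(@cvgrPdist_lt _ _ _ _ (nbhs_filter v)) => eps eps_gt0.
have near_v j : \forall w \near v, `|v ord0 j - (w : 'rV[R]_n.+1) ord0 j| < eps.
  by move: (@coord_continuous _ 1 n.+1 ord0 j v) => /cvgrPdist_lt; apply.
by apply: filterS (filter_forall _ near_v) => w; apply: h_dist.
Qed.

Lemma continuous_rowmax : continuous rowmax.
Proof. exact/coord_dist_continuous/rowmax_dist. Qed.

Lemma continuous_rowmin : continuous rowmin.
Proof. exact/coord_dist_continuous/rowmin_dist. Qed.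

Lemma cube_between (I : set R) v y :
  is_interval I -> cube I n.+1 v -> rowmin v <= y <= rowmax v -> I y.
Proof.
move=> I_int cv; have [i ->] := rowmin_attained v; have [k ->] := rowmax_attained v.
exact: I_int.
Qed.

End RowExtrema.

Definition row_bound {R : realType} {k} (b : R) (x : 'rV[R]_k) :=
  (forall j, x ord0 j <= b) \/ (forall j, b <= x ord0 j).

Definition iter_limit {R : realType} {p} (F : 'rV[R]_p.+1 -> 'rV[R]_p.+1) x :=
  limn (fun n => rowmax (iter n F x)).

Section MeanTypeIteration.
Variables (R : realType) (I : set R) (p : nat).
Variables (F : 'rV[R]_p.+1 -> 'rV[R]_p.+1) (e : rel 'I_p.+1) (r : 'I_p.+1) (m : nat).
Local Notation cube := (cube I p.+1).
Local Notation K := (iter_limit F).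

Hypothesis I_interval : is_interval I.
Hypothesis F_cube : forall x, cube x -> cube (F x).
Hypothesis F_between : forall x i, cube x -> rowmin x <= F x ord0 i <= rowmax x.
Hypothesis F_extremal : forall x b i j,
  cube x -> row_bound b x -> F x ord0 i = b -> e j i -> x ord0 j = b.
Hypothesis F_continuous : {within cube, continuous F}.
Hypothesis walk_from_r : forall i, walk e m r i.

Lemma iter_cube n x : cube x -> cube (iter n F x).
Proof. by move=> cx; elim: n => //= n IH; apply: F_cube. Qed.

Lemma rowmax_F x : cube x -> rowmax (F x) <= rowmax x.
Proof. by move=> cx; have [i ->] := rowmax_attained (F x); case/andP: (F_between i cx). Qed.

Lemma rowmin_F x : cube x -> rowmin x <= rowmin (F x).
Proof. by move=> cx; have [i ->] := rowmin_attained (F x); case/andP: (F_between i cx). Qed.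

Lemma rowmax_iter_nonincreasing x :
  cube x -> {homo (fun n => rowmax (iter n F x)) : k l / (k <= l)%N >-> l <= k}.
Proof. by move=> cx; apply/nonincreasing_seqP => n; apply/rowmax_F/iter_cube. Qed.

Lemma rowmin_iter_nondecreasing x :
  cube x -> {homo (fun n => rowmin (iter n F x)) : k l / (k <= l)%N >-> k <= l}.
Proof. by move=> cx; apply/nondecreasing_seqP => n; apply/rowmin_F/iter_cube. Qed.

Lemma iter_between n x i : cube x -> rowmin x <= iter n F x ord0 i <= rowmax x.
Proof.
move=> cx; rewrite (le_trans (rowmin_iter_nondecreasing cx (leq0n n))) ?rowmin_le //=.
exact: le_trans (rowmax_ge _ i) (rowmax_iter_nonincreasing cx (leq0n n)).
Qed.

Lemma row_bound_F b x : cube x -> row_bound b x -> row_bound b (F x).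
Proof.
move=> cx [le_b|ge_b]; [left|right] => i; have /andP [minF maxF] := F_between i cx.
  by have [j xj] := rowmax_attained x; rewrite (le_trans maxF) // xj.
by have [j xj] := rowmin_attained x; rewrite (le_trans _ minF) // xj.
Qed.

Lemma iter_extremal n x b i j : cube x -> row_bound b x ->
  iter n F x ord0 i = b -> walk e n j i -> x ord0 j = b.
Proof.
elim: n x j => [|n IH] x j cx bx; first by move=> <- /eqP->.
rewrite iterSr => Fn_b /existsP [u /andP [eju wu]].
exact: F_extremal cx bx (IH _ _ (F_cube cx) (row_bound_F cx bx) Fn_b wu) eju.
Qed.

Lemma extremes_stable_const x : cube x ->
  rowmax (iter m F x) = rowmax x -> rowmin (iter m F x) = rowmin x -> rowmin x = rowmax x.
Proof.
move=> cx max_m min_m.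
have [i1 max_i1] := rowmax_attained (iter m F x).
have [i2 min_i2] := rowmin_attained (iter m F x).
have up : row_bound (rowmax x) x by left; apply: rowmax_ge.
have lo : row_bound (rowmin x) x by right; apply: rowmin_le.
rewrite -(iter_extremal cx lo _ (walk_from_r i2)) -?min_i2 //.
by rewrite (iter_extremal cx up _ (walk_from_r i1)) -?max_i1.
Qed.

Lemma continuous_iter n : {within cube, continuous (iter n F)}.
Proof.
elim: n => [|n IH]; first by apply: continuous_subspaceT => x; apply: cvg_id.
by have := within_continuous_comp_within (@iter_cube n) IH F_continuous.
Qed.

Lemma iter_cluster x : cube x ->
  exists2 z, cube z & cluster ((fun n => iter n F x) @ \oo) z.
Proof.
move=> cx; pose box := [set v : 'rV[R]_p.+1 | forall i, [set` `[rowmin x, rowmax x]] (v ord0 i)].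
have box_compact : compact box :=
  rV_compact (fun=> @segment_compact R (rowmin x) (rowmax x)).
have in_box : \forall n \near \oo, box (iter n F x).
  by apply: filterE => n i; rewrite /= in_itv /= iter_between.
have [z [box_z cluster_z]] := box_compact ((fun n => iter n F x) @ \oo) _ in_box.
by exists z => // i; apply: (cube_between I_interval cx); have := box_z i; rewrite /= in_itv.
Qed.

Lemma rowmax_iter_cvg x : cube x -> (fun n => rowmax (iter n F x)) @ \oo --> K x.
Proof.
move=> cx; apply/cvg_ex; exists (inf (range (fun n => rowmax (iter n F x)))).
apply: nonincreasing_cvgn (rowmax_iter_nonincreasing cx) _.
exists (rowmin x) => _ [n _ <-].
exact: le_trans (rowmin_iter_nondecreasing cx (leq0n n)) (rowmin_le_rowmax _).
Qed.

Lemma rowmin_iter_is_cvg x : cube x -> cvgn (fun n => rowmin (iter n F x)).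
Proof.
move=> cx; apply/cvg_ex; exists (sup (range (fun n => rowmin (iter n F x)))).
apply: nondecreasing_cvgn (rowmin_iter_nondecreasing cx) _.
exists (rowmax x) => _ [n _ <-].
exact: le_trans (rowmin_le_rowmax _) (rowmax_iter_nonincreasing cx (leq0n n)).
Qed.

Lemma cluster_iter_value x z (g : 'rV[R]_p.+1 -> R) c k :
  cube x -> cube z -> cluster ((fun n => iter n F x) @ \oo) z -> continuous g ->
  (fun n => g (iter n F x)) @ \oo --> c -> g (iter k F z) = c.
Proof.
move=> cx cz cluster_z gc g_cvg.
have orbit_cube : ((fun n => iter n F x) @ \oo) cube.
  by apply: (filterE (F := \oo)) => n; apply: iter_cube.
have gk_cont : {within cube, continuous (g \o iter k F)}.
  exact: within_continuous_comp _ _ _ (fun y _ => gc y) (@continuous_iter k).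
have gk_cvg : (fun n => (g \o iter k F) (iter n F x)) @ \oo --> c.
  rewrite -(cvg_shiftn k) in g_cvg; apply: cvg_trans g_cvg.
  by apply: near_eq_cvg; apply: filterE => n /=; rewrite -iterD addnC.
exact: (cluster_cvg_within _ orbit_cube cluster_z cz gk_cont gk_cvg).
Qed.

Lemma rowmin_iter_cvg x : cube x -> (fun n => rowmin (iter n F x)) @ \oo --> K x.
Proof.
move=> cx; suff <- : limn (fun n => rowmin (iter n F x)) = K x.
  exact: rowmin_iter_is_cvg.
have [z cz cluster_z] := iter_cluster cx.
have max_k k := cluster_iter_value k cx cz cluster_z continuous_rowmax (rowmax_iter_cvg cx).
have min_k k := cluster_iter_value k cx cz cluster_z continuous_rowmin (rowmin_iter_is_cvg cx).
rewrite -(min_k 0) -(max_k 0); apply: extremes_stable_const cz _ _.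
  by rewrite max_k -(max_k 0).
by rewrite min_k -(min_k 0).
Qed.

Lemma iter_limit_between n x : cube x -> rowmin (iter n F x) <= K x <= rowmax (iter n F x).
Proof.
move=> cx; apply/andP; split.
  have := nondecreasing_cvgn_le (rowmin_iter_nondecreasing cx) (cvgP _ (rowmin_iter_cvg cx)) n.
  by rewrite (cvg_lim _ (rowmin_iter_cvg cx)).
exact: nonincreasing_cvgn_ge (rowmax_iter_nonincreasing cx) (cvgP _ (rowmax_iter_cvg cx)) n.
Qed.

Lemma iter_coord_cvg x i : cube x -> (fun n => iter n F x ord0 i) @ \oo --> K x.
Proof.
move=> cx; apply: squeeze_cvgr (rowmin_iter_cvg cx) (rowmax_iter_cvg cx).
by apply: filterE => n; rewrite rowmin_le rowmax_ge.
Qed.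

Lemma iter_limit_cvg x : cube x -> (fun n => iter n F x) @ \oo --> \row_(i < p.+1) K x.
Proof. by move=> cx; apply: cvg_row => i; rewrite mxE; apply: iter_coord_cvg. Qed.

Lemma iter_limit_mean : is_mean I K.
Proof.
move=> x cx; split; first exact: cube_between I_interval cx (iter_limit_between 0 cx).
have /andP [minK maxK] := iter_limit_between 0 cx.
have [i xi] := rowmin_attained x; have [k xk] := rowmax_attained x.
by split; [exists i; rewrite -xi | exists k; rewrite -xk].
Qed.

Lemma iter_limit_invariant x : cube x -> K (F x) = K x.
Proof.
move=> cx; apply: cvg_lim => //.
have := rowmax_iter_cvg cx; rewrite -cvg_shiftS => max_cvg.
by apply: cvg_trans max_cvg; apply: near_eq_cvg; apply: filterE => n; rewrite /= -iterS iterSr.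
Qed.

Lemma iter_limit_continuous : {within cube, continuous K}.
Proof.
apply/subspace_continuousP => x cx; apply/cvgrPdist_lt => eps eps_gt0.
have eps2_gt0 : 0 < eps / 2 by rewrite divr_gt0.
have [N _ /(_ N (leqnn N)) [minN maxN]] : \forall n \near \oo,
    K x - eps / 2 < rowmin (iter n F x) /\ rowmax (iter n F x) < K x + eps / 2.
  near=> n; split; near: n.
    by apply: (cvgr_gt _ (rowmin_iter_cvg cx)); lra.
  by apply: (cvgr_lt _ (rowmax_iter_cvg cx)); lra.
have near_x (g : 'rV[R]_p.+1 -> R) : continuous g ->
    \forall y \near within cube (nbhs x), `|g (iter N F x) - g (iter N F y)| < eps / 2.
  move=> gc; have gN := within_continuous_comp _ _ _ (fun y _ => gc y) (@continuous_iter N).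
  by move/subspace_continuousP/(_ x cx)/cvgrPdist_lt: gN; apply.
near=> y.
have cy : cube y by near: y; apply: withinT.
have /andP [minKy maxKy] := iter_limit_between N cy.
have dmax : `|rowmax (iter N F x) - rowmax (iter N F y)| < eps / 2.
  by near: y; apply: near_x continuous_rowmax.
have dmin : `|rowmin (iter N F x) - rowmin (iter N F y)| < eps / 2.
  by near: y; apply: near_x continuous_rowmin.
move: dmax dmin; rewrite !ltr_norml => /andP [? ?] /andP [? ?].
by rewrite /from_subspace; apply/andP; split; lra.
Unshelve. all: by end_near.
Qed.

Lemma iter_limit_local (S : {set 'I_p.+1}) (x y : 'rV[R]_p.+1) :
  r \in S -> (forall u v, e u v -> v \in S -> u \in S) ->
  (forall (z z' : 'rV[R]_p.+1) i,
    (forall j, e j i -> z ord0 j = z' ord0 j) -> F z ord0 i = F z' ord0 i) ->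
  cube x -> cube y -> (forall i, i \in S -> x ord0 i = y ord0 i) -> K x = K y.
Proof.
move=> rS S_closed F_local cx cy xy.
have iter_eq n i : i \in S -> iter n F x ord0 i = iter n F y ord0 i.
  elim: n i => [|n IH] i iS; first exact: xy.
  by apply: F_local => j eji; apply/IH/(S_closed _ _ eji).
have cvg_y := iter_coord_cvg r cy.
rewrite -(funext (fun n => iter_eq n r rS)) in cvg_y.
exact: cvg_unique _ (iter_coord_cvg r cx) cvg_y.
Qed.

Lemma iter_limit_spec :
  [/\ {within cube, continuous K}, is_mean I K,
      (forall x, cube x -> K (F x) = K x)
    & (forall x, cube x -> (fun n => iter n F x) @ \oo --> \row_(i < p.+1) K x)].
Proof.
split; [exact: iter_limit_continuous | exact: iter_limit_mean |
        exact: iter_limit_invariant | exact: iter_limit_cvg].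
Qed.

End MeanTypeIteration.

Section Means.
Context {R : realType} (I : set R).

Lemma colsub_cube n k (f : 'I_k -> 'I_n) (x : 'rV[R]_n) :
  cube I n x -> cube I k (colsub f x).
Proof. by move=> cx j; rewrite mxE. Qed.

Lemma continuous_colsub n k (f : 'I_k -> 'I_n) :
  continuous (colsub f : 'rV[R]_n -> 'rV[R]_k).
Proof.
move=> x; apply: (@cvg_row _ _ _ (nbhs_filter x)) => j; rewrite mxE.
apply: cvg_trans (@coord_continuous _ 1 n ord0 (f j) x).
by apply: near_eq_cvg; apply: filterE => y; rewrite mxE.
Qed.

Lemma is_mean_colsub n k (K : 'rV[R]_n -> R) (f : 'I_n -> 'I_k) :
  is_mean I K -> is_mean I (K \o colsub f).
Proof.
move=> K_mean y cy; have [IK [[j le_j] [j' ge_j']]] := K_mean _ (colsub_cube f cy).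
rewrite !mxE in le_j ge_j'.
by split=> //; split; [exists (f j) | exists (f j')].
Qed.

Lemma strict_mean_bound_const k (M : 'rV[R]_k -> R) y :
  is_strict_mean I M -> cube I k y -> row_bound (M y) y -> forall j, y ord0 j = M y.
Proof.
case=> M_mean M_strict cy y_bound.
have not_nonconstant : ~ nonconstant y.
  move=> /(M_strict _ cy) [[j1 lt1] [j2 lt2]].
  by case: y_bound => [/(_ j2)|/(_ j1)]; rewrite leNgt ?lt1 ?lt2.
have y_const j j' : y ord0 j = y ord0 j'.
  by apply/eqP; apply: contra_notT not_nonconstant => ne; exists j, j'.
have [_ [[j1 le1] [j2 le2]]] := M_mean _ cy.
by move=> j; apply/eqP; rewrite eq_le (y_const j j1) le1 (y_const j1 j2) le2.
Qed.

End Means.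

(* Otherwise the index [i] of [M i] would become an implicit argument. *)
Unset Implicit Arguments.

Section IncidenceIteration.
Context {R : realType} {I : set R} {p : nat} {d : 'I_p.+1 -> nat}.
Context (alpha : forall i : 'I_p.+1, 'I_(d i) -> 'I_p.+1).
Context {M : forall i : 'I_p.+1, 'rV[R]_(d i) -> R}.
Local Notation F := (Malpha alpha M).

Lemma Malpha_coord x i : F x ord0 i = M i (colsub (alpha i) x).
Proof. by rewrite mxE; congr (M i _); apply/rowP => j; rewrite !mxE. Qed.

Lemma Malpha_local (z z' : 'rV[R]_p.+1) i :
  (forall j, inc_edge alpha j i -> z ord0 j = z' ord0 j) -> F z ord0 i = F z' ord0 i.
Proof.
move=> zz'; rewrite !Malpha_coord; congr (M i _); apply/rowP => k.
by rewrite !mxE zz' //; apply/existsP; exists k.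
Qed.

Hypothesis M_mean : forall i, is_mean I (M i).

Lemma Malpha_cube x : cube I p.+1 x -> cube I p.+1 (F x).
Proof.
by move=> cx i; rewrite Malpha_coord; case: (M_mean i _ (colsub_cube (alpha i) cx)).
Qed.

Lemma Malpha_between x i : cube I p.+1 x -> rowmin x <= F x ord0 i <= rowmax x.
Proof.
move=> cx; have [_ [[j le_j] [k ge_k]]] := M_mean i _ (colsub_cube (alpha i) cx).
rewrite !mxE in le_j ge_k; rewrite Malpha_coord.
by rewrite (le_trans (rowmin_le _ _) le_j) (le_trans ge_k (rowmax_ge _ _)).
Qed.

Hypothesis M_strict : forall i, is_strict_mean I (M i).

Lemma Malpha_extremal x b i j : cube I p.+1 x -> row_bound b x ->
  F x ord0 i = b -> inc_edge alpha j i -> x ord0 j = b.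
Proof.
move=> cx x_bound; rewrite Malpha_coord => Mb /existsP [k /eqP <-].
have sub_bound : row_bound (M i (colsub (alpha i) x)) (colsub (alpha i) x).
  by rewrite Mb; case: x_bound => x_bound; [left|right] => k'; rewrite mxE.
have := strict_mean_bound_const (M_strict i) (colsub_cube (alpha i) cx) sub_bound k.
by rewrite mxE Mb.
Qed.

Hypothesis M_continuous : forall i, {within cube I (d i), continuous (M i)}.

Lemma Malpha_continuous : {within cube I p.+1, continuous F}.
Proof.
move=> x; apply: cvg_row => i.
have comp_continuous : {within cube I p.+1, continuous (M i \o colsub (alpha i))}.
  exact: within_continuous_comp_within (@colsub_cube _ I _ _ (alpha i))
    (continuous_subspaceT (@continuous_colsub _ _ _ (alpha i))) (M_continuous i).
rewrite Malpha_coord; apply: cvg_trans (comp_continuous x).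
by apply: near_eq_cvg; apply: filterE => t; rewrite Malpha_coord.
Qed.

End IncidenceIteration.

Theorem theorem3p1 (R : realType) (I : set R) (p : nat) (d : 'I_p -> nat)
  (alpha : forall i : 'I_p, 'I_(d i) -> 'I_p)
  (M : forall i : 'I_p, 'rV[R]_(d i) -> R) :
  is_interval I ->
  (0 < p)%N ->
  (forall i, 0 < d i)%N ->
  (forall i, is_mean I (M i)) ->
  ergodic_on (inc_edge alpha) (root_set (inc_edge alpha)) ->
  (forall i, {within cube I (d i), continuous (M i)}) ->
  (forall i, is_strict_mean I (M i)) ->
  exists K : 'rV[R]_p -> R,
    [/\ {within cube I p, continuous K},
        is_mean I K,
        (forall x, cube I p x -> K (Malpha alpha M x) = K x)
      & (forall x, cube I p x ->
           (fun n => iter n (Malpha alpha M) x) @ \oo --> (\row_(i < p) K x))] /\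
    (exists Kstar : 'rV[R]_(#|root_set (inc_edge alpha)|) -> R,
           is_mean I Kstar /\
           forall x, cube I p x ->
             K x = Kstar (\row_j x ord0 (enum_val j))) /\
    (forall K' : 'rV[R]_p -> R,
           {within cube I p, continuous K'} ->
           is_mean I K' ->
           (forall x, cube I p x -> K' (Malpha alpha M x) = K' x) ->
           (forall x, cube I p x ->
              (fun n => iter n (Malpha alpha M) x) @ \oo --> (\row_(i < p) K' x)) ->
           forall x, cube I p x -> K' x = K x).
Proof.
case: p d alpha M => [//|p] d alpha M I_interval _ _ M_mean ergodic M_continuous M_strict.
set F := Malpha alpha M.
have [r [m r_root walks]] := ergodic_root_walk ergodic.
have F_cube := Malpha_cube alpha M_mean; have F_between := Malpha_between alpha M_mean.
have F_extremal := Malpha_extremal alpha M_strict.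
have F_cont := Malpha_continuous alpha M_continuous.
have [K_continuous K_mean K_invariant K_cvg] :=
  iter_limit_spec I_interval F_cube F_between F_extremal F_cont walks.
exists (iter_limit F); split; first by split.
split.
  exists (iter_limit F \o colsub (enum_rank_in r_root)); split; first exact: is_mean_colsub.
  move=> x cx; apply: (iter_limit_local I_interval F_cube F_between F_extremal F_cont walks
    r_root (@root_closed _ _) (Malpha_local alpha) cx).
    by move=> i; rewrite !mxE; apply: cx.
  by move=> i i_root; rewrite !mxE enum_rankK_in.
move=> K' _ _ _ K'_cvg x cx.
have rows_eq : \row_(i < p.+1) K' x = \row_(i < p.+1) iter_limit F x.
  exact: cvg_unique _ (K'_cvg x cx) (K_cvg x cx).
by move/rowP/(_ ord0): rows_eq; rewrite !mxE.
Qed.
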